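(* There exist $\Delta q>0$, $\mu\in\mathbb R$, $\sigma>0$ and $0\le a<b\le\infty$ such that, for $\Lambda$ distributed as $\mathcal N(\mu,\sigma^2)$ truncated to $[a,b]$, one has $e^{\epsilon_{N^T}}=\frac{\mathbb E(\Lambda)}{M'_\Lambda(-\Delta q)}<M_\Lambda(\Delta q)$.
   Context: The truncated Gaussian on $[a,b]$ has density $\frac{\phi((x-\mu)/\sigma)}{\sigma(\Phi(\frac{b-\mu}{\sigma})-\Phi(\frac{a-\mu}{\sigma}))}$ for $a\le x\le b$ and $0$ otherwise, with $\phi,\Phi$ the standard normal density and CDF. $M_\Lambda(t)=\mathbb E[e^{t\Lambda}]$ and $M'_\Lambda(t)=\mathbb E[\Lambda e^{t\Lambda}]$. *)

From HB Require Import structures.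
From mathcomp Require Import all_boot all_order all_algebra.
From mathcomp Require Import all_classical all_reals all_analysis.
Set Implicit Arguments. Unset Strict Implicit. Unset Printing Implicit Defensive.
Import Order.TTheory GRing.Theory Num.Theory.
Import numFieldNormedType.Exports.
Local Open Scope classical_set_scope.
Local Open Scope ring_scope.

Section TruncGauss.
Variable R : realType.

Definition std_phi (x : R) : R := expR (- (x ^+ 2) / 2) / Num.sqrt (2 * pi).

Definition std_Phi (t : R) : R :=
  \int[@lebesgue_measure R]_(x in `]-oo, t]) std_phi x.

Definition std_Phi_ext (t : \bar R) : R :=
  match t with
  | r%:E => std_Phi r
  | +oo%E => 1
  | -oo%E => 0
  end.

Definition trunc_support (a : R) (b : \bar R) : set R :=
  [set x : R | a <= x /\ (x%:E <= b)%E].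

(* Phi((b - mu)/sigma), with (+oo - mu)/sigma = +oo for sigma > 0 *)
Definition Phi_upper (mu sigma : R) (b : \bar R) : R :=
  match b with
  | r%:E => std_Phi ((r - mu) / sigma)
  | +oo%E => 1
  | -oo%E => 0
  end.

Definition trunc_gauss_pdf (mu sigma a : R) (b : \bar R) (x : R) : R :=
  if `[< trunc_support a b x >] then
    std_phi ((x - mu) / sigma) /
      (sigma * (Phi_upper mu sigma b - std_Phi ((a - mu) / sigma)))
  else 0.

Definition trunc_gauss_expect (mu sigma a : R) (b : \bar R) (g : R -> R) : R :=
  \int[@lebesgue_measure R]_(x in [set: R]) (g x * trunc_gauss_pdf mu sigma a b x).

Definition mgf (mu sigma a : R) (b : \bar R) (t : R) : R :=
  trunc_gauss_expect mu sigma a b (fun x => expR (t * x)).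
Definition mgf' (mu sigma a : R) (b : \bar R) (t : R) : R :=
  trunc_gauss_expect mu sigma a b (fun x => x * expR (t * x)).

End TruncGauss.

From HB Require Import structures.
From mathcomp Require Import all_boot all_order all_algebra.
From mathcomp Require Import all_classical all_reals all_analysis.
From mathcomp Require Import ring lra.

Set Implicit Arguments.
Unset Strict Implicit.
Unset Printing Implicit Defensive.
Import Order.TTheory GRing.Theory Num.Theory.
Import numFieldNormedType.Exports.
Local Open Scope classical_set_scope.
Local Open Scope ring_scope.

(* Take the standard Gaussian truncated to [1, 2] and dq = 600.  Writing I_g
   for the integral of g * phi over [1, 2] and N = I_1, the claim reads
   I_id * N < I_{x e^{-600 x}} * I_{e^{600 x}}.  On [1, 2] the density phi lies
   between e^{-2} phi(0) and phi(0), so the left side is at most 2 phi(0)^2,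
   while restricting the two right-hand integrals to [1, 5/4] and [7/4, 2],
   where their tilting factors are at least e^{-750} and e^{1050}, gives at
   least phi(0)^2 e^{296} / 16. *)

Section SegmentIntegrals.
Variable R : realType.
Notation leb := (@lebesgue_measure R).
Implicit Types (f : R -> R) (u v c : R).

Lemma continuous_itv_integrable f u v : continuous f ->
  leb.-integrable `[u, v] (EFin \o f).
Proof.
move=> cf; apply: continuous_compact_integrable; first exact: segment_compact.
exact: continuous_subspaceT.
Qed.

Lemma lebesgue_measure_itvcc u v : u <= v -> fine (leb `[u, v]) = v - u.
Proof.
move=> uv; rewrite lebesgue_measure_itv /=; case: ltP => [//|] /=.
by rewrite lee_fin => vu; apply/esym/eqP; rewrite subr_eq0 eq_le uv vu.
Qed.

Lemma Rintegral_itvcc_ge_cst f u v c : continuous f -> u <= v ->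
  (forall x, u <= x <= v -> c <= f x) -> c * (v - u) <= \int[leb]_(x in `[u, v]) f x.
Proof.
move=> cf uv fc; rewrite -lebesgue_measure_itvcc // -Rintegral_cst //.
apply: le_Rintegral => //; apply: continuous_itv_integrable => //.
exact: cst_continuous.
Qed.

Lemma Rintegral_itvcc_le_cst f u v c : continuous f -> u <= v ->
  (forall x, u <= x <= v -> f x <= c) -> \int[leb]_(x in `[u, v]) f x <= c * (v - u).
Proof.
move=> cf uv fc; rewrite -lebesgue_measure_itvcc // -Rintegral_cst //.
apply: le_Rintegral => //; apply: continuous_itv_integrable => //.
exact: cst_continuous.
Qed.

Lemma Rintegral_itvcc_subset f u v u' v' : continuous f ->
  u <= u' -> v' <= v -> (forall x, u <= x <= v -> 0 <= f x) ->
  \int[leb]_(x in `[u', v']) f x <= \int[leb]_(x in `[u, v]) f x.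
Proof.
move=> cf uu' v'v f0.
have intf := continuous_itv_integrable u v cf.
have intf' := continuous_itv_integrable u' v' cf.
rewrite /Rintegral fine_le ?integrable_fin_num //.
apply: ge0_subset_integral => //.
- by case/integrableP: intf.
- by move=> x; rewrite /= !in_itv /= => /andP[u'x xv'];
    rewrite (le_trans uu' u'x) (le_trans xv' v'v).
Qed.

Lemma Rintegral_itvcc_ge_subitv f u v u' v' c : continuous f ->
  u <= u' -> u' <= v' -> v' <= v -> (forall x, u <= x <= v -> 0 <= f x) ->
  (forall x, u' <= x <= v' -> c <= f x) ->
  c * (v' - u') <= \int[leb]_(x in `[u, v]) f x.
Proof.
move=> cf uu' u'v' v'v f0 cfx.
apply: le_trans (Rintegral_itvcc_subset cf uu' v'v f0).
exact: Rintegral_itvcc_ge_cst cf u'v' cfx.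
Qed.

End SegmentIntegrals.

Section StandardGaussian.
Variable R : realType.
Notation leb := (@lebesgue_measure R).

Lemma std_phi_normal_pdf : @std_phi R = normal_pdf 0 1.
Proof.
apply/funext => x; rewrite /std_phi /normal_pdf oner_eq0 /normal_peak /normal_fun.
by rewrite subr0 expr1n mul1r mulrC mulr_natl.
Qed.

Lemma std_phi_continuous : continuous (@std_phi R).
Proof. by rewrite std_phi_normal_pdf; apply: continuous_normal_pdf; rewrite oner_eq0. Qed.

Lemma std_phi_ge0 x : 0 <= @std_phi R x.
Proof. by rewrite std_phi_normal_pdf normal_pdf_ge0. Qed.

Lemma std_phi_integrable (D : set R) : measurable D ->
  leb.-integrable D (EFin \o @std_phi R).
Proof.
move=> mD; apply: (@integrableS _ _ _ _ setT) => //.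
rewrite std_phi_normal_pdf; exact: integrable_normal_pdf.
Qed.

Lemma std_phi0 : @std_phi R 0 = (Num.sqrt (2 * pi))^-1.
Proof. by rewrite /std_phi expr0n /= oppr0 mul0r expR0 div1r. Qed.

Lemma std_phi0_gt0 : 0 < @std_phi R 0.
Proof. by rewrite std_phi0 invr_gt0 sqrtr_gt0 mulr_gt0 // pi_gt0. Qed.

Lemma std_phi_le_phi0 x : @std_phi R x <= std_phi 0.
Proof.
rewrite std_phi0 /std_phi -[leRHS]mul1r ler_wpM2r ?invr_ge0 ?sqrtr_ge0 // expR_le1.
by rewrite mulNr oppr_le0 divr_ge0 // sqr_ge0.
Qed.

Lemma std_phi_ge_expRN2_phi0 x : x ^+ 2 <= 4 -> expR (-2) * std_phi 0 <= @std_phi R x.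
Proof.
move=> x2; rewrite std_phi0 /std_phi ler_wpM2r ?invr_ge0 ?sqrtr_ge0 // ler_expR; lra.
Qed.

Lemma std_Phi_itvB (a b : R) : a <= b ->
  std_Phi b - std_Phi a = \int[leb]_(x in `[a, b]) std_phi x.
Proof.
move=> ab; rewrite /std_Phi Rintegral_itvB ?bnd_simp //; last first.
  exact: std_phi_integrable.
by rewrite Rintegral_itv_obnd_cbnd //; apply: std_phi_integrable.
Qed.

Lemma trunc_gauss_expect_std (a b : R) (g : R -> R) : a <= b -> continuous g ->
  trunc_gauss_expect 0 1 a b%:E g =
  (\int[leb]_(x in `[a, b]) (g x * std_phi x)) / \int[leb]_(x in `[a, b]) std_phi x.
Proof.
move=> ab cg; rewrite /trunc_gauss_expect /trunc_gauss_pdf /= !subr0 !divr1 mul1r.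
rewrite std_Phi_itvB //.
set N := \int[leb]_(x in `[a, b]) std_phi x.
transitivity (\int[leb]_(x in [set: R])
  ((fun x => g x * std_phi x / N) \_ `[a, b]) x).
  apply: eq_Rintegral => x _; rewrite /patch mem_setE in_itv /=.
  case: asboolP => [[ax xb]|notab].
    by rewrite ax -lee_fin xb subr0 divr1 mulrA.
  case: ifPn => [/andP[ax xb]|_]; last by rewrite mulr0.
  by exfalso; apply: notab; split => //; rewrite lee_fin.
rewrite -Rintegral_mkcond RintegralZr //.
by apply: continuous_itv_integrable => x; apply: cvgM; [exact: cg | exact: std_phi_continuous].
Qed.

End StandardGaussian.

Lemma normalised_ratio_lt (R : realFieldType) (A B C N : R) :
  0 < N -> 0 < B -> A * N < B * C -> A / N / (B / N) < C / N.
Proof.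
move=> N0 B0 ANBC.
have -> : A / N / (B / N) = A / B by field; rewrite !gt_eqF.
by rewrite ltr_pdivlMr // mulrAC ltr_pdivrMr // [C * B]mulrC.
Qed.

(* p plays the role of phi(0), and e^{-2} p that of the minimum of phi on [1, 2]. *)
Lemma ratio_lt_of_itv12_bounds (R : realType) (p N A B C : R) : 0 < p ->
  expR (-2) * p * (2 - 1) <= N -> N <= p * (2 - 1) -> A <= 2 * p * (2 - 1) ->
  expR (-750) * (expR (-2) * p) * (5 / 4 - 1) <= B ->
  expR 1050 * (expR (-2) * p) * (2 - 7 / 4) <= C ->
  A / N / (B / N) < C / N.
Proof.
move=> p0 N_ge N_le A_le B_ge C_ge.
set q := expR (-2) * p in N_ge B_ge C_ge.
have q0 : 0 < q by rewrite mulr_gt0 ?expR_gt0.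
have N0 : 0 < N by apply: lt_le_trans N_ge; rewrite mulr_gt0 //; lra.
have B0 : 0 < B by apply: lt_le_trans B_ge; rewrite !mulr_gt0 ?expR_gt0 //; lra.
apply: normalised_ratio_lt => //.
have AN : A * N <= 2 * p * p.
  have -> : 2 * p * p = 2 * p * (2 - 1) * (p * (2 - 1)) by ring.
  apply: le_trans (ler_wpM2r (ltW N0) A_le) (ler_wpM2l _ N_le).
  by rewrite !mulr_ge0 ?ltW //; lra.
have BC : expR 296 * p * p / 16 <= B * C.
  have -> : expR 296 * p * p / 16 =
      expR (-750) * q * (5 / 4 - 1) * (expR 1050 * q * (2 - 7 / 4)).
    have -> : expR 296 = expR (-750) * expR 1050 * expR (-2) * expR (-2) :> R.
      by rewrite -!expRD; congr expR; lra.
    by rewrite /q; field.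
  have lb_ge0 (e r : R) : 0 <= r -> 0 <= expR e * q * r.
    by move=> r0; exact: mulr_ge0 (mulr_ge0 (expR_ge0 e) (ltW q0)) r0.
  by apply: ler_pM (lb_ge0 _ _ _) (lb_ge0 _ _ _) B_ge C_ge; lra.
have e296 : 1 + 296 <= expR 296 :> R := expR_ge1Dx 296.
apply: le_lt_trans AN (lt_le_trans _ BC).
have -> : expR 296 * p * p / 16 = expR 296 / 16 * (p * p) by field.
rewrite -mulrA ltr_pM2r ?mulr_gt0 // ltr_pdivlMr //.
by apply: lt_le_trans e296; lra.
Qed.

Section TruncatedStdGaussianOneTwo.
Variable R : realType.
Notation leb := (@lebesgue_measure R).

Local Notation q := (expR (-2) * @std_phi R 0).

Let q_gt0 : 0 < q.
Proof. by rewrite mulr_gt0 ?expR_gt0 ?std_phi0_gt0. Qed.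

Let phi_bounds x : 1 <= x <= 2 -> q <= std_phi x <= std_phi 0.
Proof.
by move=> /andP[x1 x2]; rewrite std_phi_le_phi0 std_phi_ge_expRN2_phi0 //; nra.
Qed.

Let cont_mul_phi (g : R -> R) : continuous g -> continuous (fun x => g x * std_phi x).
Proof. by move=> cg x; apply: cvgM; [exact: cg | exact: std_phi_continuous]. Qed.

Let cont_id : continuous (@id R).
Proof. by move=> x; exact: cvg_id. Qed.

Let cont_expR_scale (t : R) : continuous (fun x : R => expR (t * x)).
Proof.
move=> x; apply: (cvg_comp (fun x => t * x) expR); last exact: continuous_expR.
by apply: cvgM; [exact: cvg_cst | exact: cont_id].
Qed.

Let cont_id_expR_scale (t : R) : continuous (fun x : R => x * expR (t * x)).
Proof. by move=> x; apply: cvgM; [exact: cont_id | exact: cont_expR_scale]. Qed.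

Lemma std_phi_itv12_mass_bounds :
  q * (2 - 1) <= \int[leb]_(x in `[1, 2]) std_phi x <= std_phi 0 * (2 - 1).
Proof.
apply/andP; split.
- apply: Rintegral_itvcc_ge_cst; [exact: std_phi_continuous|lra|].
  by move=> x /phi_bounds/andP[].
- apply: Rintegral_itvcc_le_cst; [exact: std_phi_continuous|lra|].
  by move=> x /phi_bounds/andP[].
Qed.

Lemma std_phi_itv12_mean_le :
  \int[leb]_(x in `[1, 2]) (x * std_phi x) <= 2 * std_phi 0 * (2 - 1).
Proof.
apply: Rintegral_itvcc_le_cst; [exact: cont_mul_phi cont_id|lra|].
move=> x /[dup] /andP[x1 x2] /phi_bounds/andP[_ phix].
by apply: ler_pM => //; [lra|exact: std_phi_ge0].
Qed.

Lemma std_phi_itv12_tilt_down_ge : expR (-750) * q * (5 / 4 - 1) <=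
  \int[leb]_(x in `[1, 2]) (x * expR (-600 * x) * std_phi x).
Proof.
apply: Rintegral_itvcc_ge_subitv; [exact/cont_mul_phi/cont_id_expR_scale|lra|lra|lra| |].
- move=> x /andP[x1 _]; apply: mulr_ge0; last exact: std_phi_ge0.
  by apply: mulr_ge0; [lra | exact: expR_ge0].
- move=> x /andP[x1 x2].
  have /phi_bounds/andP[qphi _] : 1 <= x <= 2 by apply/andP; split; lra.
  have ex : expR (-750) <= x * expR (-600 * x).
    apply: (@le_trans _ _ (expR (-600 * x))); first by rewrite ler_expR; lra.
    by rewrite ler_peMl ?expR_ge0.
  by apply: ler_pM; [exact: expR_ge0 | exact: ltW q_gt0 | exact: ex | exact: qphi].
Qed.

Lemma std_phi_itv12_tilt_up_ge : expR 1050 * q * (2 - 7 / 4) <=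
  \int[leb]_(x in `[1, 2]) (expR (600 * x) * std_phi x).
Proof.
apply: Rintegral_itvcc_ge_subitv; [exact/cont_mul_phi/cont_expR_scale|lra|lra|lra| |].
- by move=> x _; rewrite mulr_ge0 ?expR_ge0 ?std_phi_ge0.
- move=> x /andP[x1 x2].
  have /phi_bounds/andP[qphi _] : 1 <= x <= 2 by apply/andP; split; lra.
  have ex : expR 1050 <= expR (600 * x) by rewrite ler_expR; lra.
  by apply: ler_pM; [exact: expR_ge0 | exact: ltW q_gt0 | exact: ex | exact: qphi].
Qed.

Lemma trunc_std_gauss_ratio_lt :
  trunc_gauss_expect 0 1 1 2%:E id / mgf' 0 1 1 2%:E (-600) <
  mgf 0 1 1 2%:E (600 : R).
Proof.
rewrite /mgf /mgf' !trunc_gauss_expect_std ?ler1n //.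
have /andP[N_ge N_le] := std_phi_itv12_mass_bounds.
apply: (ratio_lt_of_itv12_bounds (std_phi0_gt0 R) N_ge N_le).
- exact: std_phi_itv12_mean_le.
- exact: std_phi_itv12_tilt_down_ge.
- exact: std_phi_itv12_tilt_up_ge.
Qed.

End TruncatedStdGaussianOneTwo.

Theorem mainTheorem14 (R : realType) :
  exists (dq mu sigma a : R) (b : \bar R),
    [/\ 0 < dq, 0 < sigma, 0 <= a, (a%:E < b)%E &
      trunc_gauss_expect mu sigma a b id / mgf' mu sigma a b (- dq)
        < mgf mu sigma a b dq].
Proof.
exists 600, 0, 1, 1, 2%:E; split; [lra | lra | lra | rewrite lte_fin; lra |].
exact: trunc_std_gauss_ratio_lt.
Qed.
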